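(* (2-cut with spill in MRL.) Let $R_1,R_2\subseteq\mathcal{R}$ be such that $\overline{R_1}$ and $\overline{R_2}$ are disjoint. For all sequents $\Gamma_1,\Gamma_2$ and every formula $A$ of MRL: if $\Gamma_1, R_1{:}A$ and $\Gamma_2, R_2{:}A$ are both derivable in MRL, then $\Gamma_1,\Gamma_2,(R_1\cap R_2){:}A$ is derivable in MRL.
   Context: Fix a nonempty set $\mathcal{R}$ (the set of roles). For $R\subseteq\mathcal{R}$ write $\overline{R}=\mathcal{R}\setminus R$. An ultrafilter $\mathcal{U}$ on $\mathcal{R}$ is a set of subsets of $\mathcal{R}$ such that $\mathcal{R}\in\mathcal{U}$; $R_1\in\mathcal{U}$ and $R_1\subseteq R_2$ imply $R_2\in\mathcal{U}$; $R_1,R_2\in\mathcal{U}$ imply $R_1\cap R_2\in\mathcal{U}$; and for every $R\subseteq\mathcal{R}$, $R\in\mathcal{U}$ or $\overline{R}\in\mathcal{U}$. An endomorphism is any function $f:\mathcal{R}\to\mathcal{R}$, and $f^{-1}(R)$ denotes the preimage of $R$. Fix a first-order language of terms $t$ with variables $x$, and a collection of primitive (atomic) formulas $a$ (which may contain terms). Formulas of MRL: $A ::= a \mid \neg_f(A) \mid A_1\wedge_{\mathcal{U}} A_2 \mid A\supset_{f,\mathcal{U}} B \mid \forall_{\mathcal{U}}(\lambda x.A)$, with $f$ an endomorphism and $\mathcal{U}$ an ultrafilter on $\mathcal{R}$; $x$ is bound in $\forall_{\mathcal{U}}(\lambda x.A)$, and $A[t/x]$ is capture-avoiding substitution. An i-formula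 is a pair $R{:}A$ with $R\subseteq\mathcal{R}$ and $A$ a formula; a sequent is a finite multiset of i-formulas, and comma denotes multiset union. Derivability in MRL is given by the rules (premises $\Rightarrow$ conclusion, $\Gamma,\Gamma_1,\Gamma_2$ arbitrary sequents): (Id) $\Gamma, R_1{:}a,\ldots,R_n{:}a$ is derivable whenever $n\ge1$ and $R_1,\ldots,R_n$ are pairwise disjoint with union $\mathcal{R}$; (Weaken) $\Gamma,R{:}A,R{:}A \Rightarrow \Gamma,R{:}A$; ($\neg$) $\Gamma, f^{-1}(R){:}A \Rightarrow \Gamma, R{:}\neg_f(A)$; ($\wedge$-neg-l) if $R\notin\mathcal{U}$: $\Gamma,R{:}A\Rightarrow\Gamma,R{:}A\wedge_{\mathcal{U}}B$; ($\wedge$-neg-r) if $R\notin\mathcal{U}$: $\Gamma,R{:}B\Rightarrow\Gamma,R{:}A\wedge_{\mathcal{U}}B$; ($\wedge$-pos) if $R\in\mathcal{U}$: $(\Gamma,R{:}A;\ \Gamma,R{:}B)\Rightarrow\Gamma,R{:}A\wedge_{\mathcal{U}}B$; ($\supset$-neg) if $R\notin\mathcal{U}$: $\Gamma,f^{-1}(R){:}A,R{:}B\Rightarrow\Gamma,R{:}A\supset_{f,\mathcal{U}}B$; ($\supset$-pos) if $R\in\mathcal{U}$: $(\Gamma_1,f^{-1}(R){:}A;\ \Gamma_2,R{:}B)\Rightarrow\Gamma_1,\Gamma_2,R{:}A\supset_{f,\mathcal{U}}B$; ($\forall$-neg) if $R\notin\mathcal{U}$ and $t$ is a term: $\Gamma,R{:}A[t/x]\Rightarrow\Gamma,R{:}\forall_{\mathcal{U}}(\lambda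 x.A)$; ($\forall$-pos) if $R\in\mathcal{U}$ and $x$ has no free occurrence in $\Gamma$: $\Gamma,R{:}A\Rightarrow\Gamma,R{:}\forall_{\mathcal{U}}(\lambda x.A)$. A sequent is derivable in MRL if it is the conclusion of a finite derivation tree built from these rules. *)

From Stdlib Require Import List Arith Permutation.
Import ListNotations.
Set Implicit Arguments.

Definition rset (Role : Type) := Role -> Prop.

Definition rcompl {Role : Type} (R : rset Role) : rset Role := fun r => ~ R r.
Definition rinter {Role : Type} (R1 R2 : rset Role) : rset Role :=
  fun r => R1 r /\ R2 r.
Definition rpreim {Role : Type} (f : Role -> Role) (R : rset Role) : rset Role :=
  fun r => R (f r).
Definition rfull {Role : Type} : rset Role := fun _ => True.
Definition rempty {Role : Type} : rset Role := fun _ => False.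

Definition is_ultrafilter {Role : Type} (U : rset Role -> Prop) : Prop :=
  U rfull /\
  (forall R1 R2 : rset Role, U R1 -> (forall r, R1 r -> R2 r) -> U R2) /\
  (forall R1 R2 : rset Role, U R1 -> U R2 -> U (rinter R1 R2)) /\
  (forall R : rset Role, U R \/ U (rcompl R)).

Definition ultrafilter (Role : Type) := { U : rset Role -> Prop | is_ultrafilter U }.

Definition uin {Role : Type} (R : rset Role) (U : ultrafilter Role) : Prop :=
  proj1_sig U R.

(* First-order terms over function symbols F, with de Bruijn variables. *)
Inductive term (F : Type) : Type :=
| Var : nat -> term F
| Fn : F -> list (term F) -> term F.
Arguments Var {F} _.

Fixpoint tshift {F : Type} (k : nat) (t : term F) : term F :=
  match t with
  | Var n => Var (if n <? k then n else S n)
  | Fn f ts => Fn f (map (tshift k) ts)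
  end.

Fixpoint tsubst {F : Type} (k : nat) (s : term F) (t : term F) : term F :=
  match t with
  | Var n => if n <? k then Var n else if n =? k then s else Var (pred n)
  | Fn f ts => Fn f (map (tsubst k s) ts)
  end.

Inductive atom (F P : Type) : Type :=
| Atom : P -> list (term F) -> atom F P.

Inductive formula (Role F P : Type) : Type :=
| Prim : atom F P -> formula Role F P
| Neg : (Role -> Role) -> formula Role F P -> formula Role F P
| And : ultrafilter Role -> formula Role F P -> formula Role F P -> formula Role F P
| Imp : (Role -> Role) -> ultrafilter Role ->
        formula Role F P -> formula Role F P -> formula Role F P
| All : ultrafilter Role -> formula Role F P -> formula Role F P.
(* All U A  represents  forall_U (lambda x. A), x being de Bruijn index 0 in A *)

Definition ashift {F P : Type} (k : nat) (a : atom F P) : atom F P :=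
  match a with Atom p ts => Atom p (map (tshift k) ts) end.
Definition asubst {F P : Type} (k : nat) (s : term F) (a : atom F P) : atom F P :=
  match a with Atom p ts => Atom p (map (tsubst k s) ts) end.

Fixpoint fshift {Role F P : Type} (k : nat) (A : formula Role F P) : formula Role F P :=
  match A with
  | Prim _ a => Prim _ (ashift k a)
  | Neg f B => Neg f (fshift k B)
  | And U B C => And U (fshift k B) (fshift k C)
  | Imp f U B C => Imp f U (fshift k B) (fshift k C)
  | All U B => All U (fshift (S k) B)
  end.

Fixpoint fsubst {Role F P : Type} (k : nat) (s : term F) (A : formula Role F P)
  : formula Role F P :=
  match A with
  | Prim _ a => Prim _ (asubst k s a)
  | Neg f B => Neg f (fsubst k s B)
  | And U B C => And U (fsubst k s B) (fsubst k s C)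
  | Imp f U B C => Imp f U (fsubst k s B) (fsubst k s C)
  | All U B => All U (fsubst (S k) (tshift 0 s) B)
  end.

Definition inst {Role F P : Type} (A : formula Role F P) (t : term F) :=
  fsubst 0 t A.

(* i-formulas and sequents (multisets represented by lists up to permutation) *)
Definition iformula (Role F P : Type) := (rset Role * formula Role F P)%type.
Definition sequent (Role F P : Type) := list (iformula Role F P).

Definition seq_shift {Role F P : Type} (G : sequent Role F P) : sequent Role F P :=
  map (fun RA => (fst RA, fshift 0 (snd RA))) G.

Definition partition_of_roles {Role : Type} (Rs : list (rset Role)) : Prop :=
  Rs <> [] /\
  (forall i j, i < length Rs -> j < length Rs -> i <> j ->
     forall r, ~ (nth i Rs rempty r /\ nth j Rs rempty r)) /\
  (forall r, exists R, In R Rs /\ R r).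

Inductive derivable {Role F P : Type} : sequent Role F P -> Prop :=
| d_perm : forall G D, Permutation G D -> derivable G -> derivable D
| d_id : forall G (Rs : list (rset Role)) (a : atom F P),
    partition_of_roles Rs ->
    derivable (G ++ map (fun R => (R, Prim _ a)) Rs)
| d_weaken : forall G R A,
    derivable (G ++ [(R, A); (R, A)]) -> derivable (G ++ [(R, A)])
| d_neg : forall G R f A,
    derivable (G ++ [(rpreim f R, A)]) -> derivable (G ++ [(R, Neg f A)])
| d_and_neg_l : forall G R U A B, ~ uin R U ->
    derivable (G ++ [(R, A)]) -> derivable (G ++ [(R, And U A B)])
| d_and_neg_r : forall G R U A B, ~ uin R U ->
    derivable (G ++ [(R, B)]) -> derivable (G ++ [(R, And U A B)])
| d_and_pos : forall G R U A B, uin R U ->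
    derivable (G ++ [(R, A)]) -> derivable (G ++ [(R, B)]) ->
    derivable (G ++ [(R, And U A B)])
| d_imp_neg : forall G R f U A B, ~ uin R U ->
    derivable (G ++ [(rpreim f R, A); (R, B)]) ->
    derivable (G ++ [(R, Imp f U A B)])
| d_imp_pos : forall G1 G2 R f U A B, uin R U ->
    derivable (G1 ++ [(rpreim f R, A)]) -> derivable (G2 ++ [(R, B)]) ->
    derivable (G1 ++ G2 ++ [(R, Imp f U A B)])
| d_all_neg : forall G R U A (t : term F), ~ uin R U ->
    derivable (G ++ [(R, inst A t)]) -> derivable (G ++ [(R, All U A)])
| d_all_pos : forall G R U A, uin R U ->
    (* eigenvariable condition: de Bruijn index 0 is fresh for the shifted G *)
    derivable (seq_shift G ++ [(R, A)]) -> derivable (G ++ [(R, All U A)]).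

From Pilot Require Import Defs.
From Stdlib Require Import List.
Import ListNotations.
From Stdlib Require Import Arith Lia Permutation Classical ClassicalEpsilon.
From Stdlib Require Import FunctionalExtensionality PropExtensionality.

(* As the complements of R1 and R2
   are disjoint, R1 and R2 cover all roles, so for the ultrafilter U of the main connective
   of A one of them, say R1, lies in U; then R1:A is introduced by an invertible rule
   (negations always are, and an atom R1:a can be split along any partition of R1).  Now
   follow the derivation of G2, R2:A and replace R2:A everywhere by (R1 ∩ R2):A, G1.  Where
   R2:A is principal, cut each component of the premise against the corresponding inverted
   component on the R1 side (a smaller formula) and reapply the rule at R1 ∩ R2, which lies
   in U exactly when R2 does; an axiom whose partition contains R2 becomes an axiom for the
   partition refined by splitting R1:a.  The argument is carried out in a set-based variant
   of the calculus, where weakening, contraction and exchange come for free. *)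

Section Terms.
Context {F : Type}.

(* The generated induction principle of [term] gives no hypothesis on the arguments of [Fn]. *)
Fixpoint term_nested_ind (Q : term F -> Prop) (HVar : forall n, Q (Var n))
  (HFn : forall f ts, Forall Q ts -> Q (Fn f ts)) (t : term F) : Q t :=
  match t with
  | Var n => HVar n
  | Fn f ts => HFn f ts ((fix all_terms (us : list (term F)) : Forall Q us :=
      match us with
      | [] => Forall_nil Q
      | u :: us' => Forall_cons u (term_nested_ind Q HVar HFn u) (all_terms us')
      end) ts)
  end.

Ltac index_cases :=
  repeat (cbn [tshift tsubst]; match goal with
  | |- context [?a <? ?b] => destruct (Nat.ltb_spec a b)
  | |- context [?a =? ?b] => destruct (Nat.eqb_spec a b)
  end); try reflexivity; try (exfalso; lia); try (f_equal; lia).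

Ltac args_case IH :=
  cbn [tshift tsubst]; f_equal; rewrite ?map_map;
  first [apply map_ext_in | etransitivity; [apply map_ext_in | apply map_id]];
  intros w Hw; rewrite Forall_forall in IH; apply IH; auto.

Lemma tshift_comm (t : term F) j k : j <= k -> tshift (S k) (tshift j t) = tshift j (tshift k t).
Proof.
  revert j k; induction t as [n | f ts IH] using term_nested_ind; intros j k Hjk.
  - index_cases.
  - args_case IH.
Qed.

Lemma tshift_tsubst_above (t s : term F) j k : j <= k ->
  tshift k (tsubst j s t) = tsubst j (tshift k s) (tshift (S k) t).
Proof.
  revert s j k; induction t as [n | f ts IH] using term_nested_ind; intros s j k Hjk.
  - index_cases.
  - args_case IH.
Qed.

Lemma tshift_tsubst_below (t s : term F) j k : j <= k ->
  tshift j (tsubst k s t) = tsubst (S k) (tshift j s) (tshift j t).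
Proof.
  revert s j k; induction t as [n | f ts IH] using term_nested_ind; intros s j k Hjk.
  - index_cases.
  - args_case IH.
Qed.

Lemma tsubst_tshift (t u : term F) j : tsubst j u (tshift j t) = t.
Proof.
  revert u j; induction t as [n | f ts IH] using term_nested_ind; intros u j.
  - index_cases.
  - args_case IH.
Qed.

Lemma tsubst_var_tshift (t : term F) j : tsubst j (Var j) (tshift (S j) t) = t.
Proof.
  revert j; induction t as [n | f ts IH] using term_nested_ind; intros j.
  - index_cases.
  - args_case IH.
Qed.

Lemma tsubst_tsubst (v s t : term F) j k : j <= k ->
  tsubst k s (tsubst j t v) = tsubst j (tsubst k s t) (tsubst (S k) (tshift j s) v).
Proof.
  revert s t j k; induction v as [n | f ts IH] using term_nested_ind; intros s t j k Hjk.
  - index_cases. subst. symmetry; apply tsubst_tshift.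
  - args_case IH.
Qed.

End Terms.

Section Formulas.
Context {Role F P : Type}.
Notation formula := (formula Role F P).

Tactic Notation "atom_case" uconstr(L) := cbn; do 2 f_equal; rewrite ?map_map;
  first [apply map_ext | etransitivity; [apply map_ext | apply map_id]];
  intros; apply L; lia.

Lemma fshift_comm (A : formula) j k : j <= k -> fshift (S k) (fshift j A) = fshift j (fshift k A).
Proof.
  revert j k; induction A as [[p ts] | | | | U A IH]; intros j k Hjk;
    try (cbn; f_equal; auto; fail).
  - atom_case tshift_comm.
  - cbn; f_equal; apply IH; lia.
Qed.

Lemma fshift_fsubst_above (A : formula) s j k : j <= k ->
  fshift k (fsubst j s A) = fsubst j (tshift k s) (fshift (S k) A).
Proof.
  revert s j k; induction A as [[p ts] | | | | U A IH]; intros s j k Hjk;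
    try (cbn; f_equal; auto; fail).
  - atom_case tshift_tsubst_above.
  - cbn; f_equal; rewrite IH by lia; f_equal; apply tshift_comm; lia.
Qed.

Lemma fshift_fsubst_below (A : formula) s j k : j <= k ->
  fshift j (fsubst k s A) = fsubst (S k) (tshift j s) (fshift j A).
Proof.
  revert s j k; induction A as [[p ts] | | | | U A IH]; intros s j k Hjk;
    try (cbn; f_equal; auto; fail).
  - atom_case tshift_tsubst_below.
  - cbn; f_equal; rewrite IH by lia; f_equal; apply tshift_comm; lia.
Qed.

Lemma fsubst_fshift (A : formula) t j : fsubst j t (fshift j A) = A.
Proof.
  revert t j; induction A as [[p ts] | | | | U A IH]; intros t j; try (cbn; f_equal; auto; fail).
  atom_case tsubst_tshift.
Qed.

Lemma fsubst_var_fshift (A : formula) j : fsubst j (Var j) (fshift (S j) A) = A.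
Proof.
  revert j; induction A as [[p ts] | | | | U A IH]; intros j; try (cbn; f_equal; auto; fail).
  atom_case tsubst_var_tshift.
Qed.

Lemma fsubst_fsubst (A : formula) s t j k : j <= k ->
  fsubst k s (fsubst j t A) = fsubst j (tsubst k s t) (fsubst (S k) (tshift j s) A).
Proof.
  revert s t j k; induction A as [[p ts] | | | | U A IH]; intros s t j k Hjk;
    try (cbn; f_equal; auto; fail).
  - atom_case tsubst_tsubst.
  - cbn; f_equal; rewrite IH by lia; f_equal.
    + symmetry; apply tshift_tsubst_below; lia.
    + f_equal; apply tshift_comm; lia.
Qed.

Fixpoint fsize (A : formula) : nat :=
  match A with
  | Prim _ _ => 1
  | Neg _ B | All _ B => S (fsize B)
  | And _ B C | Imp _ _ B C => S (fsize B + fsize C)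
  end.

Lemma fsize_fshift (A : formula) k : fsize (fshift k A) = fsize A.
Proof. revert k; induction A; intros; cbn; auto. Qed.

Lemma fsize_fsubst (A : formula) k s : fsize (fsubst k s A) = fsize A.
Proof. revert k s; induction A; intros; cbn; auto. Qed.

End Formulas.

Section Roles.
Context {Role : Type}.
Implicit Types R S X Y : rset Role.

Definition rset_eq_dec X Y : {X = Y} + {X <> Y} := excluded_middle_informative (X = Y).

Definition rcover R1 R2 : Prop := forall r, R1 r \/ R2 r.

(* [Ts] partitions [R]; unlike [partition_of_roles], repeated blocks are harmless. *)
Definition splits R (Ts : list (rset Role)) : Prop :=
  Ts <> [] /\
  (forall X Y, In X Ts -> In Y Ts -> X <> Y -> forall r, X r -> Y r -> False) /\
  (forall r, R r <-> exists T, In T Ts /\ T r).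

Lemma partition_of_roles_splits {Rs} : partition_of_roles Rs -> splits rfull Rs.
Proof.
  intros (Hne & Hdisj & Hcov); split; [exact Hne | split].
  - intros X Y HX HY HXY r HXr HYr.
    destruct (In_nth _ _ rempty HX) as (i & Hi & <-).
    destruct (In_nth _ _ rempty HY) as (j & Hj & <-).
    refine (Hdisj i j Hi Hj _ r (conj HXr HYr)); intros ->; apply HXY; reflexivity.
  - intro r; split; [intros _; apply Hcov | intros _; exact I].
Qed.

Lemma splits_partition_of_roles {Rs} :
  splits rfull Rs -> partition_of_roles (nodup rset_eq_dec Rs).
Proof.
  intros (Hne & Hdisj & Hcov); split; [| split].
  - destruct Rs as [| X Rs]; [contradiction |].
    assert (HX : In X (nodup rset_eq_dec (X :: Rs))) by (apply nodup_In; left; reflexivity).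
    intros E; rewrite E in HX; exact HX.
  - intros i j Hi Hj Hij r [Hir Hjr].
    refine (Hdisj _ _ (proj1 (nodup_In _ _ _) (nth_In _ _ Hi))
                      (proj1 (nodup_In _ _ _) (nth_In _ _ Hj)) _ r Hir Hjr).
    intros E; apply Hij; exact (proj1 (NoDup_nth _ _) (NoDup_nodup _ _) i j Hi Hj E).
  - intros r; destruct (proj1 (Hcov r) I) as (T & HT & HTr).
    exists T; rewrite nodup_In; auto.
Qed.

Lemma splits_refine {S Rs R Ts} :
  splits S Rs -> In R Rs -> splits R Ts -> splits S (Ts ++ remove rset_eq_dec R Rs).
Proof.
  intros (HRs & Hdisj & Hcov) HR (HTs & Tdisj & Tcov); split; [| split].
  - destruct Ts; [contradiction | discriminate].
  - assert (Hout : forall T X, In T Ts -> In X (remove rset_eq_dec R Rs) ->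
                   forall r, T r -> X r -> False).
    { intros T X HT HX r HTr HXr; apply in_remove in HX as [HX HXR].
      apply (Hdisj R X HR HX (not_eq_sym HXR) r); [apply Tcov; eauto | exact HXr]. }
    intros X Y HX HY HXY r HXr HYr; apply in_app_iff in HX, HY.
    destruct HX as [HX | HX], HY as [HY | HY].
    + exact (Tdisj X Y HX HY HXY r HXr HYr).
    + exact (Hout X Y HX HY r HXr HYr).
    + exact (Hout Y X HY HX r HYr HXr).
    + apply in_remove in HX as [HX _], HY as [HY _]; exact (Hdisj X Y HX HY HXY r HXr HYr).
  - intros r; rewrite Hcov; split.
    + intros (X & HX & HXr); destruct (rset_eq_dec X R) as [-> | HXR].
      * destruct (proj1 (Tcov r) HXr) as (T & HT & HTr); exists T; rewrite in_app_iff; auto.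
      * exists X; rewrite in_app_iff; split; [right; apply in_in_remove |]; assumption.
    + intros (X & HX & HXr); apply in_app_iff in HX as [HX | HX].
      * exists R; split; [exact HR | apply Tcov; eauto].
      * apply in_remove in HX as [HX _]; eauto.
Qed.

Lemma splits_inter_remove {Rs R1 R2} :
  splits rfull Rs -> In R2 Rs -> rcover R1 R2 ->
  splits R1 (rinter R1 R2 :: remove rset_eq_dec R2 Rs).
Proof.
  intros (_ & Hdisj & Hcov) HR2 H12.
  assert (Hout : forall X r, In X (remove rset_eq_dec R2 Rs) -> X r -> ~ R2 r).
  { intros X r HX HXr HR2r; apply in_remove in HX as [HX HXR].
    exact (Hdisj X R2 HX HR2 HXR r HXr HR2r). }
  split; [discriminate | split].
  - intros X Y HX HY HXY r HXr HYr.
    destruct HX as [<- | HX], HY as [<- | HY].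
    + apply HXY; reflexivity.
    + exact (Hout Y r HY HYr (proj2 HXr)).
    + exact (Hout X r HX HXr (proj2 HYr)).
    + apply in_remove in HX as [HX _], HY as [HY _]; exact (Hdisj X Y HX HY HXY r HXr HYr).
  - intros r; split.
    + intros HR1r; destruct (classic (R2 r)) as [HR2r | HR2r].
      * exists (rinter R1 R2); split; [left; reflexivity | split; assumption].
      * destruct (proj1 (Hcov r) I) as (X & HX & HXr).
        exists X; split; [| exact HXr].
        right; apply in_in_remove; [intros ->; contradiction | exact HX].
    + intros (X & [<- | HX] & HXr); [exact (proj1 HXr) |].
      destruct (H12 r) as [HR1r | HR2r]; [exact HR1r | contradiction (Hout X r HX HXr HR2r)].
Qed.

Lemma rcover_sym {R1 R2} : rcover R1 R2 -> rcover R2 R1.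
Proof. intros H r; destruct (H r); [right | left]; assumption. Qed.

Lemma rcover_rpreim f {R1 R2} : rcover R1 R2 -> rcover (rpreim f R1) (rpreim f R2).
Proof. intros H r; apply H. Qed.

Lemma rinter_comm R1 R2 : rinter R1 R2 = rinter R2 R1.
Proof.
  extensionality r; apply propositional_extensionality; unfold rinter; tauto.
Qed.

Lemma uin_mono {U R} S : uin R U -> (forall r, R r -> S r) -> uin S U.
Proof. destruct U as [U HU]; exact (proj1 (proj2 HU) R S). Qed.

Lemma uin_inter {U R S} : uin R U -> uin S U -> uin (rinter R S) U.
Proof. destruct U as [U HU]; exact (proj1 (proj2 (proj2 HU)) R S). Qed.

Lemma not_uin_inter {U} R1 {R2} : ~ uin R2 U -> ~ uin (rinter R1 R2) U.
Proof. intros HR2 H; apply HR2, (uin_mono _ H); intros r [_ H2]; exact H2. Qed.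

Lemma uin_cover {U R1 R2} : rcover R1 R2 -> ~ uin R1 U -> uin R2 U.
Proof.
  intros Hcov HR1; destruct U as [U HU]; unfold uin in *; cbn in *.
  destruct HU as (_ & Hmono & _ & Hult).
  destruct (Hult R1) as [H | H]; [contradiction |].
  apply (Hmono _ _ H); intros r Hr; destruct (Hcov r); [contradiction | assumption].
Qed.

End Roles.

Ltac in_tac :=
  repeat progress (cbn [In app]; rewrite ?in_app_iff); solve [tauto | intuition (subst; auto)].
Ltac incl_tac := let z := fresh "z" in intros z; in_tac.

Lemma incl_cons_not_in {A : Type} {x : A} {l m} : incl l (x :: m) -> ~ In x l -> incl l m.
Proof. intros Hlm Hx y Hy; destruct (Hlm y Hy) as [-> | H]; [contradiction | exact H]. Qed.

Section Calculus.
Context {Role F P : Type}.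
Notation formula := (formula Role F P).
Notation iformula := (iformula Role F P).
Notation sequent := (sequent Role F P).
Notation derivable := (@derivable Role F P).

Definition atom_at (a : atom F P) (R : rset Role) : iformula := (R, Prim _ a).

Inductive logical_rule : iformula -> list sequent -> Prop :=
| lr_neg R f A : logical_rule (R, Neg f A) [[(rpreim f R, A)]]
| lr_and_neg_l {R U} A B : ~ uin R U -> logical_rule (R, And U A B) [[(R, A)]]
| lr_and_neg_r {R U} A B : ~ uin R U -> logical_rule (R, And U A B) [[(R, B)]]
| lr_and_pos {R U} A B : uin R U -> logical_rule (R, And U A B) [[(R, A)]; [(R, B)]]
| lr_imp_neg {R} f {U} A B : ~ uin R U ->
    logical_rule (R, Imp f U A B) [[(rpreim f R, A); (R, B)]]
| lr_imp_pos {R} f {U} A B : uin R U ->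
    logical_rule (R, Imp f U A B) [[(rpreim f R, A)]; [(R, B)]]
| lr_all_neg {R U} A t : ~ uin R U -> logical_rule (R, All U A) [[(R, inst A t)]].

(* Kleene-style presentation of [derivable]: the principal formula stays in the premises and
   sequents are read as sets. *)
Inductive kderivable : sequent -> Prop :=
| kd_id {G Rs} a : splits rfull Rs -> incl (map (atom_at a) Rs) G -> kderivable G
| kd_rule {G p Ass} : In p G -> logical_rule p Ass ->
    (forall As, In As Ass -> kderivable (As ++ G)) -> kderivable G
| kd_all_pos {G R U A} : In (R, All U A) G -> uin R U ->
    kderivable ((R, A) :: Defs.seq_shift G) -> kderivable G.

Lemma kderivable_mono {G G'} : kderivable G -> incl G G' -> kderivable G'.
Proof.
  intros HG; revert G'.
  induction HG as [G Rs a HRs Hid | G p Ass Hp Hrule _ IH | G R U A HA HU _ IH];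
    intros G' HGG'.
  - exact (kd_id a HRs (incl_tran Hid HGG')).
  - apply (kd_rule (HGG' p Hp) Hrule); intros As HAs.
    apply (IH As HAs), incl_app; [apply incl_appl, incl_refl | apply incl_appr, HGG'].
  - apply (kd_all_pos (HGG' _ HA) HU), IH, incl_cons; [left; reflexivity |].
    apply incl_tl, incl_map, HGG'.
Qed.

Lemma kderivable_logical_rule G p Ass : logical_rule p Ass ->
  (forall As, In As Ass -> kderivable (G ++ As)) -> kderivable (G ++ [p]).
Proof.
  intros Hrule HAss; apply (kd_rule (p := p) (Ass := Ass)); [in_tac | exact Hrule |].
  intros As HAs; apply kderivable_mono with (1 := HAss As HAs); incl_tac.
Qed.

Lemma derivable_contract_cons x G : In x G -> derivable (x :: G) -> derivable G.
Proof.
  intros Hx HD; destruct (in_split _ _ Hx) as (G1 & G2 & ->).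
  apply d_perm with ((G1 ++ G2) ++ [x]).
  { rewrite <- app_assoc; apply Permutation_app_head, Permutation_sym, Permutation_cons_append. }
  destruct x as [R A]; apply d_weaken.
  apply d_perm with ((R, A) :: G1 ++ (R, A) :: G2); [| exact HD].
  apply Permutation_trans with ([(R, A); (R, A)] ++ G1 ++ G2); [| apply Permutation_app_comm].
  apply perm_skip, Permutation_sym, Permutation_middle.
Qed.

Lemma derivable_contract G L : derivable (G ++ L) -> incl L G -> derivable G.
Proof.
  revert G; induction L as [| x L IH]; intros G HD HL; [rewrite app_nil_r in HD; exact HD |].
  destruct (incl_cons_inv HL) as [Hx HL'].
  apply IH; [| exact HL'].
  apply derivable_contract_cons with x; [apply in_or_app; left; exact Hx |].
  apply d_perm with (G ++ x :: L); [apply Permutation_sym, Permutation_middle | exact HD].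
Qed.

Lemma derivable_logical_rule G p Ass : logical_rule p Ass ->
  (forall As, In As Ass -> derivable (G ++ As)) -> derivable (G ++ [p]).
Proof.
  intros Hrule HAss.
  assert (H1 : derivable (G ++ hd [] Ass)) by (apply HAss; destruct Hrule; left; reflexivity).
  destruct Hrule as [R f A | R U A B HU | R U A B HU | R U A B HU | R f U A B HU | R f U A B HU
                    | R U A t HU]; cbn in H1.
  - apply d_neg; exact H1.
  - apply d_and_neg_l; assumption.
  - apply d_and_neg_r; assumption.
  - apply d_and_pos; [assumption .. | apply HAss; right; left; reflexivity].
  - apply d_imp_neg; assumption.
  - apply derivable_contract with G; [| apply incl_appl, incl_refl].
    apply d_perm with (G ++ G ++ [(R, Imp f U A B)]).
    { rewrite <- app_assoc; apply Permutation_app_head, Permutation_app_comm. }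
    apply d_imp_pos; [assumption .. | apply HAss; right; left; reflexivity].
  - apply d_all_neg with t; assumption.
Qed.

Lemma derivable_kderivable {G} : derivable G -> kderivable G.
Proof.
  induction 1 as [G D Hperm _ IH | G Rs a HRs | G R A _ IH | G R f A _ IH
                 | G R U A B HU _ IH | G R U A B HU _ IH | G R U A B HU _ IH1 _ IH2
                 | G R f U A B HU _ IH | G1 G2 R f U A B HU _ IH1 _ IH2
                 | G R U A t HU _ IH | G R U A HU _ IH].
  - apply kderivable_mono with (1 := IH); intros x; apply Permutation_in, Hperm.
  - apply (kd_id a (partition_of_roles_splits HRs)), incl_appr, incl_refl.
  - apply kderivable_mono with (1 := IH); incl_tac.
  - apply kderivable_logical_rule with (1 := lr_neg R f A); intros As [<- | []]; exact IH.
  - apply kderivable_logical_rule with (1 := lr_and_neg_l A B HU); intros As [<- | []]; exact IH.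
  - apply kderivable_logical_rule with (1 := lr_and_neg_r A B HU); intros As [<- | []]; exact IH.
  - apply kderivable_logical_rule with (1 := lr_and_pos A B HU); intros As [<- | [<- | []]];
      assumption.
  - apply kderivable_logical_rule with (1 := lr_imp_neg f A B HU); intros As [<- | []]; exact IH.
  - rewrite app_assoc; apply kderivable_logical_rule with (1 := lr_imp_pos f A B HU).
    intros As [<- | [<- | []]];
      [apply kderivable_mono with (1 := IH1) | apply kderivable_mono with (1 := IH2)]; incl_tac.
  - apply kderivable_logical_rule with (1 := lr_all_neg A t HU); intros As [<- | []]; exact IH.
  - apply (kd_all_pos (R := R) (U := U) (A := A)); [in_tac | exact HU |].
    apply kderivable_mono with (1 := IH); unfold Defs.seq_shift; rewrite map_app; incl_tac.
Qed.

Lemma kderivable_derivable {G} : kderivable G -> derivable G.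
Proof.
  induction 1 as [G Rs a HRs Hid | G p Ass Hp Hrule _ IH | G R U A HA HU _ IH].
  - apply derivable_contract with (map (atom_at a) (nodup rset_eq_dec Rs)).
    + apply d_id, splits_partition_of_roles, HRs.
    + apply incl_tran with (2 := Hid), incl_map; intros X; apply nodup_In.
  - apply derivable_contract with [p]; [| intros x [<- | []]; exact Hp].
    apply derivable_logical_rule with (1 := Hrule); intros As HAs.
    apply d_perm with (As ++ G); [apply Permutation_app_comm | exact (IH As HAs)].
  - apply derivable_contract with [(R, All U A)]; [| intros x [<- | []]; exact HA].
    apply d_all_pos; [exact HU |].
    apply d_perm with ((R, A) :: Defs.seq_shift G); [apply Permutation_cons_append | exact IH].
Qed.

Definition ishift (k : nat) (RA : iformula) : iformula := (fst RA, fshift k (snd RA)).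
Definition isubst (k : nat) (s : term F) (RA : iformula) : iformula :=
  (fst RA, fsubst k s (snd RA)).

Lemma logical_rule_shift k {p Ass} : logical_rule p Ass ->
  logical_rule (ishift k p) (map (map (ishift k)) Ass).
Proof.
  destruct 1; unfold ishift; cbn; try (constructor; assumption).
  unfold inst; rewrite fshift_fsubst_above by lia; constructor; assumption.
Qed.

Lemma logical_rule_subst k s {p Ass} : logical_rule p Ass ->
  logical_rule (isubst k s p) (map (map (isubst k s)) Ass).
Proof.
  destruct 1; unfold isubst; cbn; try (constructor; assumption).
  unfold inst; rewrite fsubst_fsubst by lia; constructor; assumption.
Qed.

Lemma kderivable_shift {G} k : kderivable G -> kderivable (map (ishift k) G).
Proof.
  intros HG; revert k.
  induction HG as [G Rs a HRs Hid | G p Ass Hp Hrule _ IH | G R U A HA HU _ IH]; intros k.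
  - apply (kd_id (ashift k a) HRs).
    replace (map (atom_at (ashift k a)) Rs) with (map (ishift k) (map (atom_at a) Rs))
      by (rewrite map_map; reflexivity).
    apply incl_map, Hid.
  - apply (kd_rule (in_map _ _ _ Hp) (logical_rule_shift k Hrule)).
    intros As' HAs'; apply in_map_iff in HAs' as (As & <- & HAs).
    rewrite <- map_app; apply IH, HAs.
  - apply (kd_all_pos (in_map (ishift k) _ _ HA) HU).
    replace (Defs.seq_shift (map (ishift k) G)) with (map (ishift (S k)) (Defs.seq_shift G));
      [exact (IH (S k)) |].
    unfold Defs.seq_shift; rewrite !map_map; apply map_ext; intros [X B]; unfold ishift; cbn.
    rewrite fshift_comm by lia; reflexivity.
Qed.

Lemma kderivable_subst {G} k s : kderivable G -> kderivable (map (isubst k s) G).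
Proof.
  intros HG; revert k s.
  induction HG as [G Rs a HRs Hid | G p Ass Hp Hrule _ IH | G R U A HA HU _ IH]; intros k s.
  - apply (kd_id (asubst k s a) HRs).
    replace (map (atom_at (asubst k s a)) Rs) with (map (isubst k s) (map (atom_at a) Rs))
      by (rewrite map_map; reflexivity).
    apply incl_map, Hid.
  - apply (kd_rule (in_map _ _ _ Hp) (logical_rule_subst k s Hrule)).
    intros As' HAs'; apply in_map_iff in HAs' as (As & <- & HAs).
    rewrite <- map_app; apply IH, HAs.
  - apply (kd_all_pos (in_map (isubst k s) _ _ HA) HU).
    replace (Defs.seq_shift (map (isubst k s) G))
      with (map (isubst (S k) (tshift 0 s)) (Defs.seq_shift G)); [exact (IH (S k) (tshift 0 s)) |].
    unfold Defs.seq_shift; rewrite !map_map; apply map_ext; intros [X B]; unfold isubst; cbn.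
    rewrite fshift_fsubst_below by lia; reflexivity.
Qed.

(* [Repl y Ws]: every occurrence of [y] in a derivable sequent may be replaced by [Ws].  It
   suffices to check the steps in which [y] itself is principal. *)
Section Replacement.
Variable Repl : iformula -> sequent -> Prop.
Hypothesis Repl_shift : forall {y Ws}, Repl y Ws -> Repl (ishift 0 y) (Defs.seq_shift Ws).
Hypothesis Repl_id : forall {y Ws G Rs} a, Repl y Ws -> splits rfull Rs ->
  incl (map (atom_at a) Rs) (y :: G) -> kderivable (Ws ++ G).
Hypothesis Repl_rule : forall {y Ws G Ass}, Repl y Ws -> logical_rule y Ass ->
  (forall As, In As Ass -> kderivable (As ++ Ws ++ G)) -> kderivable (Ws ++ G).
Hypothesis Repl_all_pos : forall {R U A Ws G}, Repl (R, All U A) Ws -> uin R U ->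
  kderivable (Defs.seq_shift Ws ++ (R, A) :: Defs.seq_shift G) -> kderivable (Ws ++ G).

Lemma kderivable_replace {D} : kderivable D ->
  forall y Ws G, Repl y Ws -> incl D (y :: G) -> kderivable (Ws ++ G).
Proof.
  induction 1 as [D Rs a HRs Hid | D p Ass Hp Hrule _ IH | D R U A HA HU _ IH];
    intros y Ws G Hy HD.
  - exact (Repl_id a Hy HRs (incl_tran Hid HD)).
  - assert (IH' : forall As, In As Ass -> kderivable (As ++ Ws ++ G)).
    { intros As HAs; apply (kderivable_mono (G := Ws ++ As ++ G)); [| incl_tac].
      apply (IH As HAs y Ws (As ++ G) Hy); intros z; specialize (HD z); revert HD; in_tac. }
    destruct (HD p Hp) as [<- | HpG]; [exact (Repl_rule Hy Hrule IH') |].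
    apply (kd_rule (p := p) (Ass := Ass)); [in_tac | exact Hrule |].
    intros As HAs; apply kderivable_mono with (1 := IH' As HAs); incl_tac.
  - assert (IH' : kderivable (Defs.seq_shift Ws ++ (R, A) :: Defs.seq_shift G)).
    { apply (IH (ishift 0 y) _ _ (Repl_shift Hy)).
      intros z [<- | Hz]; [right; left; reflexivity |].
      apply in_map_iff in Hz as (x & <- & Hx).
      destruct (HD x Hx) as [<- | HxG]; [left; reflexivity |].
      right; right; exact (in_map (ishift 0) _ _ HxG). }
    destruct (HD _ HA) as [-> | HAG]; [exact (Repl_all_pos Hy HU IH') |].
    apply (kd_all_pos (R := R) (U := U) (A := A)); [in_tac | exact HU |].
    apply kderivable_mono with (1 := IH'); unfold Defs.seq_shift; rewrite map_app; incl_tac.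
Qed.

End Replacement.

Lemma incl_atoms_remove {a R Rs} {G : sequent} :
  incl (map (atom_at a) Rs) ((R, Prim _ a) :: G) ->
  incl (map (atom_at a) (remove rset_eq_dec R Rs)) G.
Proof.
  intros Hid x Hx; apply in_map_iff in Hx as (X & <- & HX); apply in_remove in HX as [HX HXR].
  destruct (Hid _ (in_map _ _ _ HX)) as [E | Hin]; [unfold atom_at in E; congruence | exact Hin].
Qed.

Inductive invertible : iformula -> sequent -> Prop :=
| inv_neg R f A : invertible (R, Neg f A) [(rpreim f R, A)]
| inv_and_l {R U} A B : uin R U -> invertible (R, And U A B) [(R, A)]
| inv_and_r {R U} A B : uin R U -> invertible (R, And U A B) [(R, B)]
| inv_imp_l {R} f {U} A B : uin R U -> invertible (R, Imp f U A B) [(rpreim f R, A)]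
| inv_imp_r {R} f {U} A B : uin R U -> invertible (R, Imp f U A B) [(R, B)]
| inv_all {R U} A t : uin R U -> invertible (R, All U A) [(R, inst A t)]
| inv_split {R Ts} a : splits R Ts -> invertible (R, Prim _ a) (map (atom_at a) Ts).

Lemma invertible_shift {y Ws} : invertible y Ws -> invertible (ishift 0 y) (Defs.seq_shift Ws).
Proof.
  destruct 1 as [| | | | | R U A t HU | R Ts a HTs]; unfold ishift; cbn;
    try (constructor; assumption).
  - unfold inst; rewrite fshift_fsubst_above by lia; constructor; assumption.
  - unfold Defs.seq_shift; rewrite map_map; exact (inv_split (ashift 0 a) HTs).
Qed.

Lemma invertible_logical_rule {y Ws Ass} : invertible y Ws -> logical_rule y Ass -> In Ws Ass.
Proof.
  intros Hinv Hrule; destruct Hinv; inversion Hrule; subst; cbn; tauto.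
Qed.

Lemma invertible_id {y Ws G Rs} a : invertible y Ws -> splits rfull Rs ->
  incl (map (atom_at a) Rs) (y :: G) -> kderivable (Ws ++ G).
Proof.
  intros Hinv HRs Hid.
  destruct (classic (In y (map (atom_at a) Rs))) as [Hy | Hy].
  - apply in_map_iff in Hy as (R & <- & HR).
    inversion Hinv as [| | | | | | R' Ts a' HTs]; subst.
    apply (kd_id a (splits_refine HRs HR HTs)).
    rewrite map_app; apply incl_app; [apply incl_appl, incl_refl | apply incl_appr].
    exact (incl_atoms_remove Hid).
  - exact (kd_id a HRs (incl_appr _ (incl_cons_not_in Hid Hy))).
Qed.

Lemma map_isubst_seq_shift t (G : sequent) : map (isubst 0 t) (Defs.seq_shift G) = G.
Proof.
  unfold Defs.seq_shift; rewrite map_map; rewrite <- map_id.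
  apply map_ext; intros [X A]; unfold isubst; cbn; rewrite fsubst_fshift; reflexivity.
Qed.

Lemma invertible_all_pos {R U A Ws G} : invertible (R, All U A) Ws -> uin R U ->
  kderivable (Defs.seq_shift Ws ++ (R, A) :: Defs.seq_shift G) -> kderivable (Ws ++ G).
Proof.
  intros Hinv _ HD; inversion Hinv as [| | | | | R' U' A' t HU |]; subst.
  apply (kderivable_subst 0 t) in HD; rewrite map_app, !map_isubst_seq_shift in HD.
  apply kderivable_mono with (1 := HD); intros z [<- | [<- | Hz]]; [left; reflexivity .. |].
  right; rewrite map_isubst_seq_shift in Hz; exact Hz.
Qed.

Lemma invertible_rule {y Ws G Ass} : invertible y Ws -> logical_rule y Ass ->
  (forall As, In As Ass -> kderivable (As ++ Ws ++ G)) -> kderivable (Ws ++ G).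
Proof.
  intros Hinv Hrule HAss.
  apply kderivable_mono with (1 := HAss _ (invertible_logical_rule Hinv Hrule)); incl_tac.
Qed.

Lemma kderivable_invert {y Ws G} : invertible y Ws -> kderivable (y :: G) -> kderivable (Ws ++ G).
Proof.
  intros Hinv HD.
  exact (kderivable_replace invertible (@invertible_shift) (@invertible_id) (@invertible_rule)
           (@invertible_all_pos) HD _ _ _ Hinv (incl_refl _)).
Qed.

Lemma kderivable_invert_all_pos {R U A G} : uin R U ->
  kderivable ((R, All U A) :: G) -> kderivable ((R, A) :: Defs.seq_shift G).
Proof.
  intros HU HD; apply (kderivable_shift 0) in HD.
  pose proof (kderivable_invert (inv_all (fshift 1 A) (Var 0) HU) HD) as HA.
  unfold inst in HA; rewrite fsubst_var_fshift in HA; exact HA.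
Qed.

(* R:A is introduced by an invertible rule; for negations and atoms this holds at every R. *)
Definition positive_at (A : formula) (R : rset Role) : Prop :=
  match A with
  | And U _ _ | Imp _ U _ _ | All U _ => uin R U
  | _ => True
  end.

Lemma positive_at_cover A {R1 R2} : rcover R1 R2 -> positive_at A R1 \/ positive_at A R2.
Proof.
  intros Hcov; destruct A as [| | U | f U | U]; cbn; auto;
    destruct (classic (uin R1 U)); eauto using uin_cover.
Qed.

Definition cut_admissible (A : formula) : Prop :=
  forall R1 R2 G1 G2, rcover R1 R2 ->
  kderivable ((R1, A) :: G1) -> kderivable ((R2, A) :: G2) ->
  kderivable ((rinter R1 R2, A) :: G1 ++ G2).

Section Cut.
Variable n : nat.
Hypothesis IH : forall B, fsize B < n -> cut_admissible B.

(* Replacing R2:A by (R1 ∩ R2):A, G1 is cutting against R1:A, G1. *)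
Inductive cut_repl : iformula -> sequent -> Prop :=
| cut_repl_intro {R1 R2 A G1} : fsize A = n -> rcover R1 R2 -> positive_at A R1 ->
    kderivable ((R1, A) :: G1) -> cut_repl (R2, A) ((rinter R1 R2, A) :: G1).

Lemma cut_repl_shift {y Ws} : cut_repl y Ws -> cut_repl (ishift 0 y) (Defs.seq_shift Ws).
Proof.
  destruct 1 as [R1 R2 A G1 Hn Hcov Hpos HD]; unfold ishift; cbn.
  constructor; [rewrite fsize_fshift; exact Hn | exact Hcov | destruct A; exact Hpos |].
  exact (kderivable_shift 0 HD).
Qed.

Lemma cut_repl_id {y Ws G Rs} a : cut_repl y Ws -> splits rfull Rs ->
  incl (map (atom_at a) Rs) (y :: G) -> kderivable (Ws ++ G).
Proof.
  destruct 1 as [R1 R2 A G1 Hn Hcov Hpos HD]; intros HRs Hid.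
  destruct (classic (In (R2, A) (map (atom_at a) Rs))) as [Hy | Hy].
  - apply in_map_iff in Hy as (R & HR & HRs2); unfold atom_at in HR; injection HR as -> <-.
    pose proof (kderivable_invert (inv_split a (splits_inter_remove HRs HRs2 Hcov)) HD) as HD'.
    pose proof (incl_atoms_remove Hid) as Hrem.
    apply kderivable_mono with (1 := HD'); intros x Hx; specialize (Hrem x); revert Hx Hrem.
    cbn [map]; unfold atom_at at 1; in_tac.
  - exact (kd_id a HRs (incl_appr _ (incl_cons_not_in Hid Hy))).
Qed.

Lemma cut_repl_rule {y Ws G Ass} : cut_repl y Ws -> logical_rule y Ass ->
  (forall As, In As Ass -> kderivable (As ++ Ws ++ G)) -> kderivable (Ws ++ G).
Proof.
  intros Hcut Hrule Hprem.
  destruct Hrule as [R f B | R U B C HU | R U B C HU | R U B C HU | R f U B C HU | R f U B C HU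
                    | R U B t HU];
    inversion Hcut as [R1 R2 A G1 Hn Hcov Hpos HD]; subst; cbn in Hn, Hpos.
  - apply (kd_rule (in_eq _ _) (lr_neg _ f B)); intros As [<- | []].
    apply kderivable_mono with (1 := IH B ltac:(lia) _ _ _ _ (rcover_rpreim f Hcov)
      (kderivable_invert (inv_neg R1 f B) HD) (Hprem _ (in_eq _ _))); incl_tac.
  - apply (kd_rule (in_eq _ _) (lr_and_neg_l B C (not_uin_inter R1 HU))); intros As [<- | []].
    apply kderivable_mono with (1 := IH B ltac:(lia) _ _ _ _ Hcov
      (kderivable_invert (inv_and_l B C Hpos) HD) (Hprem _ (in_eq _ _))); incl_tac.
  - apply (kd_rule (in_eq _ _) (lr_and_neg_r B C (not_uin_inter R1 HU))); intros As [<- | []].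
    apply kderivable_mono with (1 := IH C ltac:(lia) _ _ _ _ Hcov
      (kderivable_invert (inv_and_r B C Hpos) HD) (Hprem _ (in_eq _ _))); incl_tac.
  - apply (kd_rule (in_eq _ _) (lr_and_pos B C (uin_inter Hpos HU))); intros As [<- | [<- | []]].
    + apply kderivable_mono with (1 := IH B ltac:(lia) _ _ _ _ Hcov
        (kderivable_invert (inv_and_l B C Hpos) HD) (Hprem _ (in_eq _ _))); incl_tac.
    + apply kderivable_mono with (1 := IH C ltac:(lia) _ _ _ _ Hcov
        (kderivable_invert (inv_and_r B C Hpos) HD) (Hprem _ (in_cons _ _ _ (in_eq _ _))));
        incl_tac.
  - pose proof (IH B ltac:(lia) _ _ _ _ (rcover_rpreim f Hcov)
      (kderivable_invert (inv_imp_l f B C Hpos) HD) (Hprem _ (in_eq _ _))) as HB.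
    assert (HB' : kderivable ((R, C) :: (rpreim f (rinter R1 R), B) :: G1 ++
                              (rinter R1 R, Imp f U B C) :: G1 ++ G))
      by (apply kderivable_mono with (1 := HB); incl_tac).
    pose proof (IH C ltac:(lia) _ _ _ _ Hcov (kderivable_invert (inv_imp_r f B C Hpos) HD) HB')
      as HBC.
    apply (kd_rule (in_eq _ _) (lr_imp_neg f B C (not_uin_inter R1 HU))); intros As [<- | []].
    apply kderivable_mono with (1 := HBC); incl_tac.
  - apply (kd_rule (in_eq _ _) (lr_imp_pos f B C (uin_inter Hpos HU))); intros As [<- | [<- | []]].
    + apply kderivable_mono with (1 := IH B ltac:(lia) _ _ _ _ (rcover_rpreim f Hcov)
        (kderivable_invert (inv_imp_l f B C Hpos) HD) (Hprem _ (in_eq _ _))); incl_tac.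
    + apply kderivable_mono with (1 := IH C ltac:(lia) _ _ _ _ Hcov
        (kderivable_invert (inv_imp_r f B C Hpos) HD) (Hprem _ (in_cons _ _ _ (in_eq _ _))));
        incl_tac.
  - apply (kd_rule (in_eq _ _) (lr_all_neg B t (not_uin_inter R1 HU))); intros As [<- | []].
    apply kderivable_mono with (1 := IH (inst B t) ltac:(unfold inst; rewrite fsize_fsubst; lia)
      _ _ _ _ Hcov (kderivable_invert (inv_all B t Hpos) HD) (Hprem _ (in_eq _ _))); incl_tac.
Qed.

Lemma cut_repl_all_pos {R U A Ws G} : cut_repl (R, All U A) Ws -> uin R U ->
  kderivable (Defs.seq_shift Ws ++ (R, A) :: Defs.seq_shift G) -> kderivable (Ws ++ G).
Proof.
  intros Hcut HU HD2; inversion Hcut as [R1 R2 A' G1 Hn Hcov Hpos HD]; subst; cbn in Hn, Hpos.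
  change (kderivable ((rinter R1 R, All U A) :: G1 ++ G)).
  apply (kd_all_pos (in_eq _ _) (uin_inter Hpos HU)).
  assert (HD2' : kderivable ((R, A) :: Defs.seq_shift ((rinter R1 R, All U A) :: G1 ++ G))).
  { apply kderivable_mono with (1 := HD2); unfold Defs.seq_shift; cbn [map]; rewrite map_app.
    incl_tac. }
  apply kderivable_mono
    with (1 := IH A ltac:(lia) _ _ _ _ Hcov (kderivable_invert_all_pos Hpos HD) HD2').
  unfold Defs.seq_shift; cbn [map]; rewrite map_app; incl_tac.
Qed.

Lemma cut_positive {A R1 R2 G1 G2} : fsize A = n -> rcover R1 R2 -> positive_at A R1 ->
  kderivable ((R1, A) :: G1) -> kderivable ((R2, A) :: G2) ->
  kderivable ((rinter R1 R2, A) :: G1 ++ G2).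
Proof.
  intros Hn Hcov Hpos HD1 HD2.
  exact (kderivable_replace cut_repl (@cut_repl_shift) (@cut_repl_id) (@cut_repl_rule)
           (@cut_repl_all_pos) HD2 _ _ _ (cut_repl_intro Hn Hcov Hpos HD1) (incl_refl _)).
Qed.

End Cut.

Lemma cut_admissible_all A : cut_admissible A.
Proof.
  remember (fsize A) as n eqn:Hn; revert A Hn.
  induction n as [n IH] using lt_wf_ind; intros A Hn R1 R2 G1 G2 Hcov HD1 HD2.
  assert (IH' : forall B, fsize B < n -> cut_admissible B)
    by (intros B HB; exact (IH _ HB B eq_refl)).
  destruct (positive_at_cover A Hcov) as [Hpos | Hpos].
  - exact (cut_positive n IH' (eq_sym Hn) Hcov Hpos HD1 HD2).
  - rewrite rinter_comm.
    apply kderivable_mono with (1 := cut_positive n IH' (eq_sym Hn) (rcover_sym Hcov) Hpos HD2 HD1).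
    incl_tac.
Qed.

End Calculus.

Theorem mainTheorem5 (Role F P : Type) (r0 : Role)
  (R1 R2 : rset Role)
  (Hdisj : forall r, ~ (rcompl R1 r /\ rcompl R2 r))
  (G1 G2 : sequent Role F P) (A : formula Role F P) :
  derivable (G1 ++ [(R1, A)]) ->
  derivable (G2 ++ [(R2, A)]) ->
  derivable (G1 ++ G2 ++ [(rinter R1 R2, A)]).
Proof.
  intros H1 H2.
  assert (Hcov : rcover R1 R2).
  { intros r; destruct (classic (R1 r)) as [HR1 | HR1]; [left; exact HR1 | right].
    apply NNPP; intros HR2; exact (Hdisj r (conj HR1 HR2)). }
  apply kderivable_derivable, (kderivable_mono (G := (rinter R1 R2, A) :: G1 ++ G2)); [| incl_tac].
  apply cut_admissible_all; [exact Hcov | ..];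
    [apply kderivable_mono with (1 := derivable_kderivable H1)
    | apply kderivable_mono with (1 := derivable_kderivable H2)]; incl_tac.
Qed.
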